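(* Let $\mathbb{K}\in\{\mathbb{R},\mathbb{C}\}$, $d\ge4$, let $g\in\mathsf{GL}_d(\mathbb{K})$ satisfy $\sigma_d(g)=\sigma_1(g)^{-1}$, and let $0<\epsilon<\frac{2}{d-1}$. Then there exists $k\in\{1,\dots,d-1\}$ such that $\sigma_k(g)\ge\sigma_1(g)^{1-d\epsilon}$ and $\frac{\sigma_k}{\sigma_{k+1}}(g)\ge\sigma_1(g)^{\epsilon}$.
   Context: $\sigma_1(g)\ge\dots\ge\sigma_d(g)$ are the singular values of $g$ and $\frac{\sigma_i}{\sigma_j}(g)=\sigma_i(g)/\sigma_j(g)$. *)

From mathcomp Require Import all_boot all_order all_algebra.
From mathcomp Require Import all_classical all_reals all_analysis.
From mathcomp Require Import complex.
Set Implicit Arguments. Unset Strict Implicit. Unset Printing Implicit Defensive.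
Import Order.TTheory GRing.Theory Num.Theory.
Local Open Scope ring_scope.

(* Generic setting: a scalar field K with a conjugation [conj] (identity for
   K = R, complex conjugation for K = C) and the embedding [emb : R -> K] of
   the real numbers into K. *)
Section SingularValues.
Variables (R : realType) (K : numFieldType) (conj : K -> K) (emb : R -> K).

Definition adjmx (m n : nat) (A : 'M[K]_(m, n)) : 'M[K]_(n, m) :=
  map_mx conj A^T.

Definition unitary_mx (n : nat) (U : 'M[K]_n) : Prop :=
  U *m adjmx U = 1%:M.

(* Index i : 'I_n corresponds to sigma_(i+1). *)
Definition singular_values (n : nat) (g : 'M[K]_n) (s : 'I_n -> R) : Prop :=
  (forall i, 0 <= s i) /\
  (forall i j : 'I_n, (i <= j)%N -> s j <= s i) /\
  exists U V : 'M[K]_n,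
    [/\ unitary_mx U, unitary_mx V &
        g = U *m diag_mx (\row_i emb (s i)) *m adjmx V].

End SingularValues.

Definition singular_values_R (R : realType) (n : nat) (g : 'M[R]_n)
  (s : 'I_n -> R) : Prop :=
  @singular_values R R id id n g s.

Definition singular_values_C (R : realType) (n : nat) (g : 'M[R[i]]_n)
  (s : 'I_n -> R) : Prop :=
  @singular_values R R[i] conjc (real_complex R) n g s.

(* Pass to logarithms: a_k = ln sigma_(k+1) descends from L = ln sigma_1 >= 0
   to -L in d - 1 steps.  Since the total descent 2 L exceeds (d - 1) eps L,
   some step drops by at least eps L, i.e. sigma_k / sigma_(k+1) >= sigma_1^eps;
   before the first such step the sequence has lost at most (d - 2) eps L,
   whence sigma_k >= sigma_1^(1 - d eps). *)
From mathcomp Require Import all_boot all_order all_algebra.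
From mathcomp Require Import all_classical all_reals all_analysis.
From mathcomp Require Import complex.
From mathcomp Require Import lra.
Set Implicit Arguments. Unset Strict Implicit. Unset Printing Implicit Defensive.
Import Order.TTheory GRing.Theory Num.Theory.
Local Open Scope ring_scope.

Section Drops.
Variables (R : numDomainType) (a : nat -> R).

Lemma sum_drops m : \sum_(0 <= k < m) (a k - a k.+1) = a 0%N - a m.
Proof.
by rewrite (telescope_sumr_eq (fun k => - a k)) // => [|k _]; rewrite opprK addrC.
Qed.

Lemma drops_le_sum m (c : R) : (forall k, (k < m)%N -> a k - a k.+1 <= c) ->
  a 0%N - a m <= c *+ m.
Proof.
move=> le_c; rewrite -sum_drops -[m in c *+ m]subn0 -sumr_const_nat.
by apply: ler_sum_nat => k /andP[_]; apply: le_c.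
Qed.

Lemma drops_lt_sum m (c : R) : (0 < m)%N ->
  (forall k, (k < m)%N -> a k - a k.+1 < c) -> a 0%N - a m < c *+ m.
Proof.
move=> m_gt0 lt_c; rewrite -sum_drops -[m in c *+ m]subn0 -sumr_const_nat.
by apply: ltr_sum_nat => // k /andP[_]; apply: lt_c.
Qed.

End Drops.

Lemma exists_large_drop (R : realDomainType) (a : nat -> R) (n : nat) (L e : R) :
  (0 < n)%N -> 0 <= L -> 0 < e -> e * n%:R < 2 -> a 0%N = L -> a n = - L ->
  exists i, [/\ (i < n)%N, (1 - n.+1%:R * e) * L <= a i & e * L <= a i - a i.+1].
Proof.
move=> n_gt0 L_ge0 e_gt0 en_lt2 a0 an.
pose large_drop i := (i < n)%N && (e * L <= a i - a i.+1).
have has_large_drop : exists i, large_drop i.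
  have [/hasP[i /[!mem_iota] /= lt_in drop_i]|/hasPn small] :=
    boolP (has (fun i => e * L <= a i - a i.+1) (iota 0 n)).
    by exists i; apply/andP.
  have : a 0%N - a n < e * L *+ n.
    apply: drops_lt_sum => // k lt_kn.
    by rewrite ltNge small ?mem_iota.
  rewrite a0 an -mulr_natr.
  have : 0 <= (2 - e * n%:R) * L by apply: mulr_ge0 => //; lra.
  nra.
case: (ex_minnP has_large_drop) => i /andP[lt_in drop_i] min_i.
exists i; split=> //.
have small_before : forall k, (k < i)%N -> a k - a k.+1 <= e * L.
  move=> k lt_ki; apply: ltW; rewrite ltNge; apply: contraTN (lt_ki) => drop_k.
  by rewrite -leqNgt min_i // /large_drop drop_k (ltn_trans lt_ki lt_in).
have := drops_le_sum small_before; rewrite a0 -mulr_natr => le_ai.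
have : (i%:R : R) <= n.+1%:R by rewrite ler_nat (leqW (ltnW lt_in)).
have : 0 <= e * L by apply: mulr_ge0 => //; apply: ltW.
nra.
Qed.

Lemma reciprocal_extremes_large_gap (R : realType) n (s : 'I_n.+1 -> R) eps :
  (0 < n)%N -> 0 < s ord0 -> (forall i j : 'I_n.+1, (i <= j)%N -> s j <= s i) ->
  s ord_max = (s ord0)^-1 -> 0 < eps -> eps < 2 / n%:R ->
  exists i : 'I_n.+1, [/\ (i < n)%N,
    s ord0 `^ (1 - n.+1%:R * eps) <= s i & s ord0 `^ eps <= s i / s (inord i.+1)].
Proof.
move=> n_gt0 s0_gt0 s_noninc s_max eps_gt0 eps_lt.
have s_gt0 i : 0 < s i.
  by apply: lt_le_trans (s_noninc i ord_max _); rewrite ?s_max ?invr_gt0 // -ltnS.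
have s0_ge1 : 1 <= s ord0.
  rewrite leNgt; apply/negP => s0_lt1.
  have : 1 < s ord_max by rewrite s_max invf_gt1.
  have := s_noninc ord0 ord_max (leq0n _).
  lra.
have [|||||i [lt_in lnsi_ge ln_gap]] :=
    @exists_large_drop R (fun k => ln (s (inord k))) n (ln (s ord0)) eps n_gt0.
- exact: ln_ge0.
- exact: eps_gt0.
- by rewrite -ltr_pdivlMr ?ltr0n.
- by congr (ln (s _)); apply/val_inj; rewrite /= inordK.
- have -> : inord n = ord_max :> 'I_n.+1 by apply/val_inj; rewrite /= inordK.
  by rewrite s_max lnV ?posrE.
exists (inord i); rewrite inordK ?(leqW lt_in); split=> //.
  by rewrite -ler_ln ?posrE ?powR_gt0 // ln_powR.
rewrite -ler_ln ?posrE ?powR_gt0 ?divr_gt0 // ln_powR lnM ?posrE ?invr_gt0 //.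
by rewrite lnV ?posrE.
Qed.

Section SingularValueGap.
Variables (R : realType) (K : numFieldType) (conj : K -> K) (emb : R -> K).
Hypothesis emb0 : emb 0 = 0.

Lemma singular_value_first_gt0 n (g : 'M[K]_n.+1) s :
  g \in unitmx -> singular_values conj emb g s -> 0 < s ord0.
Proof.
move=> g_unit [s_ge0 [s_noninc [U [V [_ _ g_svd]]]]].
rewrite lt_def s_ge0 andbT; apply/eqP => s0_eq0.
have s_eq0 i : s i = 0 by apply/le_anti; rewrite s_ge0 -s0_eq0 s_noninc.
have diag_eq0 : diag_mx (\row_i emb (s i)) = 0.
  by apply/matrixP => i j; rewrite !mxE s_eq0 emb0 mul0rn.
by move: g_unit; rewrite g_svd diag_eq0 mulmx0 mul0mx unitmxE det0 unitr0.
Qed.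

Lemma singular_values_large_gap n (g : 'M[K]_n.+1) s eps :
  (0 < n)%N -> g \in unitmx -> singular_values conj emb g s ->
  s ord_max = (s ord0)^-1 -> 0 < eps -> eps < 2 / n%:R ->
  exists i : 'I_n.+1, [/\ (i < n)%N,
    s ord0 `^ (1 - n.+1%:R * eps) <= s i & s ord0 `^ eps <= s i / s (inord i.+1)].
Proof.
move=> n_gt0 g_unit g_sv.
apply: reciprocal_extremes_large_gap => //.
  exact: singular_value_first_gt0 g_unit g_sv.
by case: g_sv => _ [].
Qed.

End SingularValueGap.

Theorem lemma4p3 (R : realType) :
  (forall (n : nat) (g : 'M[R]_n.+1) (s : 'I_n.+1 -> R) (eps : R),
     (3 <= n)%N -> g \in unitmx -> singular_values_R g s ->
     s ord_max = (s ord0)^-1 ->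
     0 < eps -> eps < 2 / n%:R ->
     exists i : 'I_n.+1, [/\ (i < n)%N,
        s ord0 `^ (1 - n.+1%:R * eps) <= s i &
        s ord0 `^ eps <= s i / s (inord i.+1)])
  /\
  (forall (n : nat) (g : 'M[R[i]]_n.+1) (s : 'I_n.+1 -> R) (eps : R),
     (3 <= n)%N -> g \in unitmx -> singular_values_C g s ->
     s ord_max = (s ord0)^-1 ->
     0 < eps -> eps < 2 / n%:R ->
     exists i : 'I_n.+1, [/\ (i < n)%N,
        s ord0 `^ (1 - n.+1%:R * eps) <= s i &
        s ord0 `^ eps <= s i / s (inord i.+1)]).
Proof.
split=> n g s eps n_ge3;
  by apply: singular_values_large_gap => //; apply: leq_trans n_ge3.
Qed.
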